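(* Let $P$ and $P'$ be two temporal patterns over a temporal sequence database $\mathcal{D}_{\text{SEQ}}$ with $P'\subseteq P$. Then $\textit{conf}(P')\ge\textit{conf}(P)$.
   Context: $\mathcal{D}_{\text{SEQ}}$ is a finite collection of temporal sequences (lists of event instances $(\omega,[t_s,t_e])$ of temporal events $E=(\omega,T)$, ordered by start time). A temporal pattern is a list of triples $(r_{ij},E_i,E_j)$ with $r_{ij}\in\{\text{Follows},\text{Contains},\text{Overlaps}\}$; $P'\subseteq P$ means $P'$ is a sub-pattern of $P$ (its triples are among those of $P$). A sequence supports a pattern iff it has at least two instances and each triple's relation holds between some instances of the two events in the sequence. $\textit{supp}(E)$ is the number of sequences containing an instance of $E$; $\textit{supp}(P)$ the number of sequences supporting $P$; $\textit{conf}(P)=\textit{supp}(P)/\max_{E_k\in P}\textit{supp}(E_k)$, the maximum over events occurring in $P$. *)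

From HB Require Import structures.
From mathcomp Require Import all_boot all_order all_algebra.
Set Implicit Arguments. Unset Strict Implicit. Unset Printing Implicit Defensive.
Import Order.TTheory GRing.Theory Num.Theory.

Inductive trel := Follows | Contains | Overlaps.

Definition trel_eqb (r1 r2 : trel) : bool :=
  match r1, r2 with
  | Follows, Follows | Contains, Contains | Overlaps, Overlaps => true
  | _, _ => false
  end.
Lemma trel_eqP : Equality.axiom trel_eqb.
Proof. by case; case; constructor. Qed.
HB.instance Definition _ := hasDecEq.Build trel trel_eqP.

Section Temporal.
(* Omega : event labels (a temporal event E = (omega, T) is identified by its
   label omega; its instances in a sequence are the instances carrying omega).
   R : time domain. *)
Variables (Omega : eqType) (R : realDomainType).
Local Open Scope ring_scope.

Record instance := Inst { lbl : Omega; ts : R; te : R }.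

Definition tseq := seq instance.
Definition well_ordered (s : tseq) : Prop := sorted (fun a b => ts a <= ts b) s.

Definition holds (r : trel) (a b : instance) : bool :=
  match r with
  | Follows  => te a <= ts b
  | Contains => (ts a <= ts b) && (te b <= te a)
  | Overlaps => [&& ts a < ts b, ts b < te a & te a < te b]
  end.

Definition triple := (trel * Omega * Omega)%type.
Definition pattern := seq triple.

Definition subpattern (P' P : pattern) : Prop := forall t, t \in P' -> t \in P.

Definition supports (s : tseq) (P : pattern) : bool :=
  (2 <= size s)%N &&
  all (fun t : triple =>
    [exists i : 'I_(size s), exists j : 'I_(size s),
      (i != j) &&
      [&& lbl (tnth (in_tuple s) i) == t.1.2,
          lbl (tnth (in_tuple s) j) == t.2 &
          holds t.1.1 (tnth (in_tuple s) i) (tnth (in_tuple s) j)]]) P.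

Definition supp_ev (D : seq tseq) (e : Omega) : nat :=
  count (fun s => has (fun x => lbl x == e) s) D.

Definition supp_pat (D : seq tseq) (P : pattern) : nat :=
  count (fun s => supports s P) D.

Definition events (P : pattern) : seq Omega :=
  flatten [seq [:: t.1.2; t.2] | t <- P].

Definition conf (D : seq tseq) (P : pattern) : rat :=
  (supp_pat D P)%:R / (\max_(e <- events P) supp_ev D e)%N%:R.

End Temporal.

(* Every sequence supporting P supports its sub-pattern P', so the numerator
   of the confidence can only grow from P to P'; the events of P' are among
   those of P, so the denominator can only shrink.  The one subtle case is a
   zero denominator for P', where division returns 0: since P' is nonempty,
   its support is at most that of any of its events, so it is then 0, and so
   is the support of P. *)

From mathcomp Require Import all_boot all_order all_algebra.
Import Order.TTheory GRing.Theory Num.Theory.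
Local Open Scope ring_scope.

Lemma ler_ratio_nat (F : numFieldType) (a a' b b' : nat) :
  (a <= a')%N -> (a' <= b')%N -> (b' <= b)%N ->
  a%:R / b%:R <= a'%:R / b'%:R :> F.
Proof.
move=> le_aa' le_a'b' le_b'b.
have [b'0 | b'_gt0] := posnP b'.
  have a0 : a = 0%N by apply/eqP; rewrite -leqn0 -b'0 (leq_trans le_aa').
  by rewrite a0 mul0r divr_ge0 ?ler0n.
have b_gt0 : (0 < b)%N := leq_trans b'_gt0 le_b'b.
apply: (@le_trans _ _ (a'%:R / b%:R)).
  by apply: ler_wpM2r; rewrite ?invr_ge0 ?ler0n ?ler_nat.
by apply: ler_wpM2l; rewrite ?ler0n // lef_pV2 ?posrE ?ltr0n ?ler_nat.
Qed.

Section Confidence.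

Variables (Omega : eqType) (R : realDomainType).
Implicit Types (s : tseq Omega R) (D : seq (tseq Omega R)) (P Q : pattern Omega).

Lemma supports_subpattern s P Q :
  subpattern Q P -> supports s P -> supports s Q.
Proof.
move=> subQ /andP[size_s /allP witnessed]; rewrite /supports size_s.
by apply/allP => t /subQ /witnessed.
Qed.

Lemma supp_pat_subpattern D P Q :
  subpattern Q P -> (supp_pat D P <= supp_pat D Q)%N.
Proof. by move=> subQ; apply: sub_count => s; apply: supports_subpattern. Qed.

Lemma events_subpattern P Q :
  subpattern Q P -> {subset events Q <= events P}.
Proof.
move=> subQ e /flatten_mapP[t tQ e_t].
by apply/flatten_mapP; exists t; first exact: subQ.
Qed.

Lemma max_supp_ev_subpattern D P Q :
  subpattern Q P ->
  (\max_(e <- events Q) supp_ev D e <= \max_(e <- events P) supp_ev D e)%N.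
Proof.
move=> /events_subpattern subE; apply/bigmax_leqP_seq => e eQ _.
exact: leq_bigmax_seq (subE e eQ) _.
Qed.

Lemma supports_has_lbl s P t :
  supports s P -> t \in P -> has (fun x => lbl x == t.1.2) s.
Proof.
move=> /andP[_ /allP witnessed] /witnessed.
case/existsP=> i /existsP[j /andP[_ /and3P[lbl_i _ _]]].
apply/(has_nthP (tnth (in_tuple s) i)); exists i => //.
by rewrite (tnth_nth (tnth (in_tuple s) i)) in lbl_i.
Qed.

Lemma supp_pat_le_supp_ev D P t :
  t \in P -> (supp_pat D P <= supp_ev D t.1.2)%N.
Proof. by move=> tP; apply: sub_count => s /supports_has_lbl; apply. Qed.

Lemma supp_pat_le_max_supp_ev D P :
  P != [::] -> (supp_pat D P <= \max_(e <- events P) supp_ev D e)%N.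
Proof.
case: P => [//|t P] _.
apply: leq_trans (supp_pat_le_supp_ev D _ _ (mem_head t P)) _.
by apply: leq_bigmax_seq; rewrite // /events /= inE eqxx.
Qed.

End Confidence.

Theorem lemma6 (Omega : eqType) (R : realDomainType)
    (D : seq (tseq Omega R)) (P P' : pattern Omega) :
  P' != [::] -> subpattern P' P ->
  conf D P <= conf D P'.
Proof.
move=> P'_ne0 subP'; apply: ler_ratio_nat.
- exact: supp_pat_subpattern.
- exact: supp_pat_le_max_supp_ev.
- exact: max_supp_ev_subpattern.
Qed.
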